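(* For all $n \geq 2$ and $1 \leq i \leq n$, $$a_{n,i}(p,q)=p^iq\sum_{j=i}^{n-1}a_{n-1,j}(p,q)+p^iq\sum_{j=1}^{i-1}q^{i-j}a_{n-1,j}(p,q),$$ and $a_{1,1}(p,q)=pq^2$.
   Context: An inversion sequence of length $n$ is a sequence $\rho=\rho_1\cdots\rho_n$ of integers with $1\le \rho_i\le i$ for all $1\le i\le n$. Let $I_n$ be the set of inversion sequences of length $n$ and $I_{n,i}$ the subset of those with last letter $\rho_n=i$. Each $\rho$ is represented as a bargraph whose $i$-th column consists of $\rho_i$ unit cells standing on the $x$-axis. The area of $\rho$ is $\mathrm{area}(\rho)=\rho_1+\cdots+\rho_n$, and the semi-perimeter $\mathrm{sper}(\rho)$ is half the perimeter of the bargraph (the bottom boundary on the $x$-axis included); equivalently $\mathrm{sper}(\rho)=n+\rho_1+\sum_{i=1}^{n-1}\max(\rho_{i+1}-\rho_i,0)$. Define $a_{n,i}(p,q)=\sum_{\rho\in I_{n,i}}p^{\mathrm{area}(\rho)}q^{\mathrm{sper}(\rho)}$. *)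

From mathcomp Require Import all_boot all_order all_algebra.
Set Implicit Arguments. Unset Strict Implicit. Unset Printing Implicit Defensive.
Import GRing.Theory.

(* An inversion sequence of length n is rho_1 ... rho_n with 1 <= rho_i <= i.
   We encode it as rho : {ffun 'I_n -> 'I_n.+1}, with rho_(k+1) = rho k
   (0-based index k), subject to 1 <= rho k <= k+1. *)
Definition is_invseq (n : nat) (rho : {ffun 'I_n -> 'I_n.+1}) : bool :=
  [forall k : 'I_n, (0 < rho k) && (rho k <= k.+1)].

Definition last_letter (n : nat) (rho : {ffun 'I_n -> 'I_n.+1}) : nat :=
  last 0 [seq (rho k : nat) | k <- enum 'I_n].

Definition area (n : nat) (rho : {ffun 'I_n -> 'I_n.+1}) : nat :=
  \sum_(k < n) (rho k : nat).

(* sper = n + rho_1 + sum_{i=1}^{n-1} max(rho_{i+1} - rho_i, 0),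
   i.e. half the perimeter of the bargraph. With the list s = [rho_1;...;rho_n],
   this is n + sum over consecutive pairs (0,rho_1),(rho_1,rho_2),... of
   the truncated difference. *)
Definition sper (n : nat) (rho : {ffun 'I_n -> 'I_n.+1}) : nat :=
  let s := [seq (rho k : nat) | k <- enum 'I_n] in
  n + sumn (pairmap (fun a b => b - a) 0 s).

Definition a_ni (R : comNzRingType) (n i : nat) (p q : R) : R :=
  \sum_(rho : {ffun 'I_n -> 'I_n.+1} | is_invseq rho && (last_letter rho == i))
     p ^+ area rho * q ^+ sper rho.

From mathcomp Require Import all_boot all_order all_algebra.
From mathcomp Require Import ring.
Local Open Scope ring_scope.
Import GRing.Theory.

Set Implicit Arguments.
Unset Strict Implicit.
Unset Printing Implicit Defensive.

(* An inversion sequence of length n with last letter i is an inversion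
   sequence s of length n - 1 followed by i, and appending i adds i to the
   area and 1 + max(i - last s, 0) to the semi-perimeter.  Grouping the s by
   their last letter j gives a_{n,i} = sum_j p^i q^(1 + max(i - j, 0)) a_{n-1,j},
   which splits at j = i into the two sums of the statement.  To make
   appending a letter available, inversion sequences are handled as lists of
   letters, enumerated by appending one letter at a time. *)

Lemma all2_rcons (S T : Type) (r : S -> T -> bool) s t x y :
  all2 r (rcons s x) (rcons t y) = all2 r s t && r x y.
Proof.
elim: s t => [|a s IH] [|b t] /=; rewrite ?IH ?andbA ?andbT //.
- by case: t => [|? ?]; rewrite andbF.
- by case: {IH}s => [|? ?]; rewrite andbF.
Qed.

Lemma all2_nth (S T : Type) (r : S -> T -> bool) x0 y0 s t k :
  all2 r s t -> (k < size s)%N -> r (nth x0 s k) (nth y0 t k).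
Proof.
elim: s t k => [|a s IH] [|b t] [|k] //= /andP[r_ab all2_st]; first by [].
exact: IH.
Qed.

Definition is_invseq_seq (n : nat) (s : seq nat) : bool :=
  all2 (fun x k => 0 < x <= k)%N s (iota 1 n).

Fixpoint invseqs (n : nat) : seq (seq nat) :=
  if n is m.+1 then [seq rcons s x | s <- invseqs m, x <- iota 1 n] else [:: [::]].

Lemma size_is_invseq_seq n s : is_invseq_seq n s -> size s = n.
Proof. by rewrite /is_invseq_seq all2E size_iota => /andP[/eqP]. Qed.

Lemma is_invseq_seq_rcons n s x :
  is_invseq_seq n.+1 (rcons s x) = is_invseq_seq n s && (0 < x <= n.+1)%N.
Proof. by rewrite /is_invseq_seq -(addn1 n) iotaD cats1 all2_rcons add1n addn1. Qed.

Lemma mem_invseqs n s : (s \in invseqs n) = is_invseq_seq n s.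
Proof.
elim: n s => [|n IH] s; first by case: s.
apply/allpairsPdep/idP => [[s' [x [s'_in x_in ->]]]|].
  by rewrite is_invseq_seq_rcons -IH s'_in -mem_iota.
case/lastP: s => [|s x]; first by [].
rewrite is_invseq_seq_rcons -IH -mem_iota => /andP[s_in x_in].
by exists s, x.
Qed.

Lemma invseqs_uniq n : uniq (invseqs n).
Proof.
elim: n => [|n IH] //.
apply: (allpairs_uniq (f := fun s (x : nat) => rcons s x)) => //; first exact: iota_uniq.
by move=> [s x] [s' x'] _ _ /= /rcons_inj [-> ->].
Qed.

Lemma last_invseqsS m s : s \in invseqs m.+1 -> last 0%N s \in index_iota 1 m.+2.
Proof. by case/allpairsPdep => s' [x [_ x_in ->]]; rewrite last_rcons. Qed.

Section Letters.
Variable n : nat.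
Implicit Type rho : {ffun 'I_n -> 'I_n.+1}.

Definition letters rho : seq nat := [seq (rho k : nat) | k <- enum 'I_n].

Lemma size_letters rho : size (letters rho) = n.
Proof. by rewrite size_map size_enum_ord. Qed.

Lemma nth_letters rho (k : 'I_n) : nth 0%N (letters rho) k = rho k.
Proof. by rewrite (nth_map k) ?size_enum_ord // nth_ord_enum. Qed.

Lemma letters_inj : injective letters.
Proof.
move=> rho rho' eq_l; apply/ffunP => k; apply: val_inj.
by have := congr1 (nth 0%N ^~ k) eq_l; rewrite /= !nth_letters.
Qed.

Lemma is_invseqE rho : is_invseq rho = is_invseq_seq n (letters rho).
Proof.
rewrite /is_invseq_seq -[1%N]addn0 iotaDl -val_enum_ord -map_comp.
rewrite all2E !size_map eqxx zip_map all_map.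
by apply/forallP/allP => /= ok k //; apply: ok; rewrite mem_enum.
Qed.

Lemma letters_onto s :
  is_invseq_seq n s -> letters [ffun k : 'I_n => inord (nth 0%N s k)] = s.
Proof.
move=> s_ok; have size_s := size_is_invseq_seq s_ok.
apply: (@eq_from_nth _ 0%N); rewrite size_letters ?size_s // => k k_lt_n.
rewrite (nth_letters _ (Ordinal k_lt_n)) ffunE inordK //.
have := all2_nth 0%N 0%N s_ok; rewrite size_s => /(_ k k_lt_n) /andP[_].
by rewrite nth_iota // add1n ltnS => /leq_trans; apply.
Qed.

Lemma perm_letters_invseqs :
  perm_eq [seq letters rho | rho in @is_invseq n] (invseqs n).
Proof.
apply: uniq_perm; first by rewrite map_inj_uniq ?enum_uniq //; apply: letters_inj.
  exact: invseqs_uniq.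
move=> s; rewrite mem_invseqs; apply/imageP/idP => [[rho rho_ok ->]|s_ok].
  by rewrite -is_invseqE.
exists [ffun k : 'I_n => inord (nth 0%N s k)]; last by rewrite letters_onto.
by rewrite -topredE /= is_invseqE letters_onto.
Qed.

End Letters.

Lemma big_pred1_seq (R : Type) (idx : R) (op : Monoid.law idx) (I : eqType)
    (r : seq I) (a : I) (F : I -> R) :
  uniq r -> a \in r -> \big[op/idx]_(i <- r | i == a) F i = F a.
Proof. by move=> r_uniq a_in; rewrite -big_filter filter_pred1_uniq // big_seq1. Qed.

Lemma big_partition_seq (R : nmodType) (I J : eqType) (r : seq I) (keys : seq J)
    (f : I -> J) (F : I -> R) :
  uniq keys -> {in r, forall i, f i \in keys} ->
  \sum_(i <- r) F i = \sum_(j <- keys) \sum_(i <- r | f i == j) F i.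
Proof.
move=> keys_uniq f_keys.
under [RHS]eq_bigr do rewrite big_mkcond.
rewrite exchange_big; apply: eq_big_seq => i i_in /=.
by rewrite -big_mkcond (eq_bigl _ _ (fun j => eq_sym _ j)) big_pred1_seq ?f_keys.
Qed.

Section Weight.
Variables (R : comNzRingType) (p q : R).

Definition weight (s : seq nat) : R :=
  p ^+ sumn s * q ^+ (size s + sumn (pairmap (fun a b => b - a) 0 s))%N.

Lemma weight_rcons s x :
  weight (rcons s x) = p ^+ x * q ^+ (x - last 0%N s).+1 * weight s.
Proof.
rewrite /weight sumn_rcons size_rcons -cats1 pairmap_cat sumn_cat /= addn0.
by rewrite !(exprD, exprS); ring.
Qed.

Lemma weight_letters n (rho : {ffun 'I_n -> 'I_n.+1}) :
  weight (letters rho) = p ^+ area rho * q ^+ sper rho.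
Proof. by rewrite /weight size_letters /area sumnE big_map big_enum. Qed.

Lemma a_niE n i : a_ni n i p q = \sum_(s <- invseqs n | last 0%N s == i) weight s.
Proof.
rewrite -(perm_big _ (perm_letters_invseqs n)) big_image_cond.
by apply: eq_bigr => rho _; rewrite weight_letters.
Qed.

Lemma a_niS m i : (0 < i <= m.+1)%N ->
  a_ni m.+1 i p q = \sum_(s <- invseqs m) p ^+ i * q ^+ (i - last 0%N s).+1 * weight s.
Proof.
move=> i_range; rewrite a_niE big_mkcond big_allpairs_dep; apply: eq_bigr => s _.
rewrite -big_mkcond; under eq_bigl => x do rewrite last_rcons.
by rewrite big_pred1_seq ?iota_uniq ?mem_iota ?add1n ?weight_rcons.
Qed.

Lemma a_ni_recurrence m i : (0 < m)%N -> (0 < i <= m.+1)%N ->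
  a_ni m.+1 i p q = \sum_(1 <= j < m.+1) p ^+ i * q ^+ (i - j).+1 * a_ni m j p q.
Proof.
case: m => [|m] // _ i_range; rewrite a_niS //.
rewrite (@big_partition_seq _ _ _ _ (index_iota 1 m.+2) (last 0%N)); last first.
- exact: last_invseqsS.
- exact: iota_uniq.
apply: eq_bigr => j _; rewrite a_niE mulr_sumr.
by apply: eq_bigr => s /eqP ->.
Qed.

End Weight.

Theorem lemma2p1 (R : comNzRingType) (p q : R) :
  (forall n i : nat, (2 <= n)%N -> (1 <= i <= n)%N ->
     a_ni n i p q =
       p ^+ i * q * (\sum_(i <= j < n) a_ni n.-1 j p q)
       + p ^+ i * q * (\sum_(1 <= j < i) q ^+ (i - j) * a_ni n.-1 j p q))
  /\ a_ni 1 1 p q = p * q ^+ 2.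
Proof.
split; last by rewrite a_niE /= big_mkcond big_seq1 /weight /=.
move=> [|m] // i m_gt0 /andP[i_gt0 i_le]; rewrite a_ni_recurrence ?i_gt0 //=.
rewrite (big_cat_nat i_gt0 i_le) [RHS]addrC !mulr_sumr; congr (_ + _).
- by apply: eq_bigr => j _; rewrite exprS !mulrA.
- apply: eq_big_nat => j /andP[i_le_j _].
  by move: i_le_j; rewrite -subn_eq0 => /eqP ->; rewrite expr1.
Qed.
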